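(* Let $K$ be a field, $A$ a subring of $K$, and $Z:=\mathrm{Zar}(K|A)$. Then: (1) The ultrafilter topology on $Z$ is finer than the Zariski topology on $Z$. (2) For any subset $S$ of $K$, the set $B_S:=\{V\in Z\mid V\supseteq S\}$ is closed in the ultrafilter topology. In particular, the basic open sets $B_F$ ($F$ a finite subset of $K$) of the Zariski topology are both open and closed in the ultrafilter topology. (3) Let $Z^{\#}$ denote $Z$ endowed with the $\#$-topology, defined as the coarsest topology on $Z$ for which $B_F$ is both open and closed for every finite subset $F$ of $K$. Then $Z^{\#}$ is a Hausdorff topological space. (4) The $\#$-topology on $Z$ is the coarsest topology having as closed sets the closed sets and the quasi-compact open sets of $Z$ with the Zariski topology; i.e., the family $\{B_F \mid F \text{ a finite subset of } K\}\cup\{\bigcap\{Z\setminus B_G\mid G\in\mathcal G\}\mid \mathcal G \text{ a set of finite subsets of } K\}$ is a subbasis for the closed subsets of $Z^{\#}$. (5) $Z$ with the ultrafilter topology is a Hausdorff compact topological space. (6) The ultrafilter topology, the $\#$-topology and the constructible topology on $Z$ coincide.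
   Context: $\mathrm{Zar}(K|A)$ denotes the set of all valuation rings of $K$ containing $A$. For $S\subseteq K$, $B_S:=\{V\in Z\mid V\supseteq S\}$, and $B_x:=B_{\{x\}}$. The Zariski topology on $Z$ is the topology having as a basis of open sets the sets $B_F$, $F$ ranging over the finite subsets of $K$. A filter on a set $X$ is a nonempty collection of subsets of $X$ not containing $\emptyset$, closed under finite intersections and supersets; an ultrafilter is a maximal filter. For $Y\subseteq Z$ nonempty and $\mathscr U$ an ultrafilter on $Y$, $A_{\mathscr U,Y}:=\{x\in K\mid B_x\cap Y\in\mathscr U\}$ (a valuation domain in $Z$). A subset $Y\subseteq Z$ is stable for ultrafilters if $A_{\mathscr U,Y}\in Y$ for all ultrafilters $\mathscr U$ on $Y$; the ultrafilter topology on $Z$ is the topology whose closed sets are exactly the subsets stable for ultrafilters. For a topological space $\mathcal X$, the constructible topology on $\mathcal X$ is the topology having as a basis the Boolean algebra of subsets of $\mathcal X$ generated (under finite unions, finite intersections and complements) by the quasi-compact open subsets of $\mathcal X$; on $Z$ it is taken with respect to the Zariski topology. *)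

From HB Require Import structures.
From mathcomp Require Import all_boot all_algebra.
From mathcomp Require Import boolp classical_sets cardinality.
Set Implicit Arguments. Unset Strict Implicit. Unset Printing Implicit Defensive.
Import GRing.Theory.
Local Open Scope classical_set_scope.
Local Open Scope ring_scope.

Section Defs.
Variable K : fieldType.

Definition is_subring (A : set K) : Prop :=
  A 1 /\ (forall x y, A x -> A y -> A (x - y)) /\
  (forall x y, A x -> A y -> A (x * y)).

Definition is_valring (V : set K) : Prop :=
  is_subring V /\ (forall x : K, x != 0 -> V x \/ V x^-1).

Definition zar (A : set K) : Type := {V : set K | is_valring V /\ A `<=` V}.

Variable A : set K.
Local Notation Z := (zar A).

Definition Bset (S : set K) : set Z := [set V | S `<=` proj1_sig V].
End Defs.
Arguments Bset {K} A S _ : rename.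

Section Topo.
Variable T : Type.

Definition is_topology (tau : set (set T)) : Prop :=
  tau setT /\ tau set0 /\
  (forall U V, tau U -> tau V -> tau (U `&` V)) /\
  (forall F : set (set T), F `<=` tau -> tau (\bigcup_(U in F) U)).

Definition closed_in (tau : set (set T)) (C : set T) : Prop := tau (~` C).

Definition finer (tau1 tau2 : set (set T)) : Prop := tau2 `<=` tau1.

Definition basis_topology (B : set (set T)) : set (set T) :=
  [set U | forall x, U x -> exists2 W, B W & W x /\ W `<=` U].

Definition gen_topology (S : set (set T)) : set (set T) :=
  [set U | forall tau, is_topology tau -> S `<=` tau -> tau U].

Definition gen_topology_closed (C : set (set T)) : set (set T) :=
  gen_topology [set U | exists2 D, C D & U = ~` D].

Definition hausdorff (tau : set (set T)) : Prop :=
  forall x y : T, x <> y ->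
    exists U V, [/\ tau U, tau V, U x, V y & U `&` V = set0].

Definition qcompact (tau : set (set T)) (C : set T) : Prop :=
  forall cov : set (set T), cov `<=` tau -> C `<=` \bigcup_(U in cov) U ->
    exists2 fin : set (set T), finite_set fin /\ fin `<=` cov &
      C `<=` \bigcup_(U in fin) U.

Definition bool_alg (G : set (set T)) : set (set T) :=
  [set W | forall Bf : set (set T), G `<=` Bf ->
     (forall U V, Bf U -> Bf V -> Bf (U `|` V)) ->
     (forall U V, Bf U -> Bf V -> Bf (U `&` V)) ->
     (forall U, Bf U -> Bf (~` U)) -> Bf W].

Definition is_filter_on (Y : set T) (F : set (set T)) : Prop :=
  [/\ (forall S, F S -> S `<=` Y), (exists S, F S), ~ F set0,
      (forall S1 S2, F S1 -> F S2 -> F (S1 `&` S2)) &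
      (forall S1 S2, F S1 -> S1 `<=` S2 -> S2 `<=` Y -> F S2)].

Definition is_ultrafilter_on (Y : set T) (F : set (set T)) : Prop :=
  is_filter_on Y F /\
  (forall G, is_filter_on Y G -> F `<=` G -> G = F).
End Topo.

Section ZarTop.
Variables (K : fieldType) (A : set K).
Local Notation Z := (zar A).

Definition Bfin : set (set Z) := [set W | exists2 F : set K, finite_set F & W = Bset A F].

Definition zariski_open : set (set Z) := basis_topology Bfin.

Definition A_uf (Y : set Z) (U : set (set Z)) : set K :=
  [set x | U (Bset A [set x] `&` Y)].

Definition stable_uf (Y : set Z) : Prop :=
  forall U, is_ultrafilter_on Y U -> exists2 V : Z, Y V & proj1_sig V = A_uf Y U.

Definition uf_open : set (set Z) := [set U | stable_uf (~` U)].

Definition sharp_open : set (set Z) :=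
  gen_topology [set U | exists2 F : set K, finite_set F & (U = Bset A F \/ U = ~` Bset A F)].

Definition constructible_open : set (set Z) :=
  basis_topology (bool_alg [set W | zariski_open W /\ qcompact zariski_open W]).
End ZarTop.
Arguments Bfin {K} A _.
Arguments zariski_open {K} A _.
Arguments A_uf {K} A Y U _.
Arguments stable_uf {K} A Y.
Arguments uf_open {K} A _.
Arguments sharp_open {K} A _.
Arguments constructible_open {K} A _.

From mathcomp Require Import all_boot all_algebra.
From mathcomp Require Import boolp classical_sets cardinality.
From mathcomp Require filter.
Local Open Scope classical_set_scope.

(* Every ultrafilter U on a subset Y of Z has a "limit" A_{U,Y}, again a
   valuation ring of K containing A.  The sets B_S and the complements of the
   B_F (F finite) are stable for ultrafilters, so the ultrafilter topology is a
   topology in which every B_F is clopen: it is finer than the #-topology,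
   which is Hausdorff because the clopen sets B_{x} separate points.  Applied
   to an ultrafilter on Z extending a would-be cover without finite subcover,
   the limit point lies in no member of the cover, so the ultrafilter topology
   is compact; a compact topology finer than a Hausdorff one coincides with it.
   Finally the quasi-compact Zariski opens are finite unions of sets B_F, hence
   #-clopen, and the constructible and subbasis descriptions follow. *)

Set Implicit Arguments. Unset Strict Implicit.

Lemma finite_set_ind (I : Type) (P : set I -> Prop) : P set0 ->
  (forall B x, P B -> P (x |` B)) -> forall B, finite_set B -> P B.
Proof.
move=> P0 PS B /finite_setP [n]; elim: n B => [|n IH] B.
  by rewrite II0 card_eq0 => /eqP ->.
by move=> /eq_cardSP [x Bx /IH /(PS _ x)]; rewrite setD1K.
Qed.

Section Topology.
Variable T : Type.
Implicit Types (tau sigma : set (set T)) (U V W C : set T).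

Lemma setI_bigcap_closed (P : set (set T)) Y (I : Type) (D : set I) (f : I -> set T) :
  P Y -> (forall U V, P U -> P V -> P (U `&` V)) -> finite_set D ->
  (forall i, D i -> P (f i)) -> P (Y `&` \bigcap_(i in D) f i).
Proof.
move=> PY PI; move: D; apply: finite_set_ind.
  by move=> _; rewrite bigcap_set0 setIT.
move=> B x IH Pf; rewrite bigcap_setU1 setICA; apply: PI; first by apply: Pf; left.
by apply: IH => i Bi; apply: Pf; right.
Qed.

Lemma topology_open_local tau U : is_topology tau ->
  (forall x, U x -> exists2 W, tau W & W x /\ W `<=` U) -> tau U.
Proof.
move=> [_ [_ [_ tau_bigcup]]] Ulocal.
have -> : U = \bigcup_(W in [set W | tau W /\ W `<=` U]) W.
  apply/seteqP; split=> [x /Ulocal [W tW [Wx WU]]|x [W [_ WU] /WU //]].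
  by exists W.
by apply: tau_bigcup => W [].
Qed.

Lemma topologyI tau U V : is_topology tau -> tau U -> tau V -> tau (U `&` V).
Proof. by move=> [_ [_ [tauI _]]]; apply: tauI. Qed.

Lemma topologyU tau U V : is_topology tau -> tau U -> tau V -> tau (U `|` V).
Proof.
move=> topo tU tV; apply: topology_open_local => // x [Ux|Vx].
  by exists U => //; split => // y; left.
by exists V => //; split => // y; right.
Qed.

Lemma topology_bigcap tau (I : Type) (D : set I) (f : I -> set T) :
  is_topology tau -> finite_set D -> (forall i, D i -> tau (f i)) ->
  tau (\bigcap_(i in D) f i).
Proof.
move=> topo Dfin tf; rewrite -[X in tau X]setTI.
by apply: setI_bigcap_closed => //; [case: topo | move=> U V; apply: topologyI].
Qed.

Lemma gen_topology_is_topology (S : set (set T)) : is_topology (gen_topology S).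
Proof.
split; first by move=> tau [].
split; first by move=> tau [_ []].
split; first by move=> U V tU tV tau topo St; apply: topologyI (tU _ topo St) (tV _ topo St).
move=> F Fopen tau topo St; case: (topo) => _ [_ [_ tau_bigcup]].
by apply: tau_bigcup => U /Fopen; apply.
Qed.

Lemma gen_topology_sub (S : set (set T)) : S `<=` gen_topology S.
Proof. by move=> U SU tau _; apply. Qed.

Lemma gen_topology_min (S : set (set T)) tau : is_topology tau -> S `<=` tau ->
  gen_topology S `<=` tau.
Proof. by move=> topo St U; apply. Qed.

Lemma gen_topology_eq (S1 S2 : set (set T)) : S1 `<=` gen_topology S2 ->
  S2 `<=` gen_topology S1 -> gen_topology S1 = gen_topology S2.
Proof.
by move=> S12 S21; apply/seteqP; split; apply: gen_topology_min => //;
  exact: gen_topology_is_topology.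
Qed.

Lemma basis_topology_is_topology (B : set (set T)) : B setT ->
  (forall U V, B U -> B V -> B (U `&` V)) -> is_topology (basis_topology B).
Proof.
move=> BT BI; split; first by move=> x _; exists setT.
split; first by [].
split.
  move=> U V bU bV x [Ux Vx].
  have [W1 BW1 [W1x W1U]] := bU x Ux; have [W2 BW2 [W2x W2V]] := bV x Vx.
  by exists (W1 `&` W2); [exact: BI | split => // y [/W1U ? /W2V ?]].
move=> F Fopen x [U FU Ux]; have [W BW [Wx WU]] := Fopen U FU x Ux.
by exists W => //; split => // y /WU Uy; exists U.
Qed.

Lemma basis_topology_sub (B : set (set T)) : B `<=` basis_topology B.
Proof. by move=> W BW x Wx; exists W => //; split. Qed.

Lemma basis_topology_min (B : set (set T)) tau : is_topology tau -> B `<=` tau ->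
  basis_topology B `<=` tau.
Proof.
move=> topo Bt U bU; apply: topology_open_local => // x /bU [W BW WxU].
by exists W => //; apply: Bt.
Qed.

Lemma clopen_bool_alg tau (G : set (set T)) : is_topology tau ->
  (forall W, G W -> tau W /\ tau (~` W)) ->
  forall W, bool_alg G W -> tau W /\ tau (~` W).
Proof.
move=> topo Gclopen W /(_ [set W | tau W /\ tau (~` W)]); apply => //.
- move=> U V [tU tU'] [tV tV'] /=; rewrite setCU.
  by split; [apply: topologyU | apply: topologyI].
- move=> U V [tU tU'] [tV tV'] /=; rewrite setCI.
  by split; [apply: topologyI | apply: topologyU].
- by move=> U [tU tU'] /=; rewrite setCK.
Qed.

Lemma qcompact_closed tau C : qcompact tau setT -> closed_in tau C -> qcompact tau C.
Proof.
move=> cpt cC cov cov_open Ccov.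
have [|x _|fin [fin_finite fin_sub] fin_cov] := cpt (~` C |` cov).
- by move=> W [->|/cov_open].
- have [Cx|nCx] := pselect (C x); last by exists (~` C) => //; left.
  by have [W ? ?] := Ccov x Cx; exists W => //; right.
exists (fin `&` cov); first by split; [exact: sub_finite_set fin_finite | move=> W []].
move=> x Cx; have [W finW Wx] := fin_cov x I.
by case: (fin_sub W finW) => [WC|covW]; [move: Wx; rewrite WC | exists W].
Qed.

Lemma hausdorff_qcompact_closed tau C : is_topology tau -> hausdorff tau ->
  qcompact tau C -> closed_in tau C.
Proof.
move=> topo haus cpt; rewrite /closed_in; apply: topology_open_local => // y nCy.
pose cov := [set U | tau U /\ exists V, [/\ tau V, V y & U `&` V = set0]].
have [|x Cx|fin [fin_finite fin_sub] fin_cov] := cpt cov.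
- by move=> U [].
- have xy : x <> y by move=> exy; apply: nCy; rewrite -exy.
  have [U [V [tU tV Ux Vy UV]]] := haus x y xy.
  by exists U => //; split => //; exists V.
have sep U : exists V, fin U -> [/\ tau V, V y & U `&` V = set0].
  have [finU|] := pselect (fin U); last by exists setT.
  by have [_ [V ?]] := fin_sub U finU; exists V.
have [g gsep] := choice sep.
exists (\bigcap_(U in fin) g U).
  by apply: topology_bigcap => // U /gsep [].
split=> [U /gsep [] //|z gz Cz].
have [U finU Uz] := fin_cov z Cz; have [_ _ Ug0] := gsep U finU.
have : (U `&` g U) z by split => //; apply: gz.
by rewrite Ug0.
Qed.

Lemma qcompact_hausdorff_coarser_sub tau sigma : is_topology sigma ->
  sigma `<=` tau -> qcompact tau setT -> hausdorff sigma -> tau `<=` sigma.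
Proof.
move=> topo_sigma sigma_tau cpt haus W tW.
have tcpt : qcompact tau (~` W) by apply: qcompact_closed cpt _; rewrite /closed_in setCK.
have scpt : qcompact sigma (~` W).
  by move=> cov cov_sigma; apply: tcpt; apply: subset_trans cov_sigma sigma_tau.
by have := hausdorff_qcompact_closed topo_sigma haus scpt; rewrite /closed_in setCK.
Qed.

Section FilterOn.
Variables (Y : set T) (F : set (set T)).
Hypothesis F_filter : is_filter_on Y F.

Lemma filter_on_sub P : F P -> P `<=` Y. Proof. by case: F_filter => H _ _ _ _; apply: H. Qed.
Lemma filter_onI P Q : F P -> F Q -> F (P `&` Q).
Proof. by case: F_filter => _ _ _ H _; apply: H. Qed.
Lemma filter_onS P Q : F P -> P `<=` Q -> Q `<=` Y -> F Q.
Proof. by case: F_filter => _ _ _ _ H; apply: H. Qed.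
Lemma filter_on_neq0 : ~ F set0. Proof. by case: F_filter. Qed.
Lemma filter_on_total : F Y.
Proof.
by case: F_filter => H [S FS] _ _ _; apply: (filter_onS FS) => //; apply: H.
Qed.
End FilterOn.

Lemma ultrafilter_onP Y (F : set (set T)) :
  is_ultrafilter_on Y F <->
  is_filter_on Y F /\ forall S, S `<=` Y -> F S \/ F (Y `\` S).
Proof.
split=> [[Ffil Fmax]|[Ffil Fdich]]; last first.
  split => // G Gfil FG; apply/seteqP; split => // S GS.
  have [//|/FG GYS] := Fdich S (filter_on_sub Gfil GS).
  by have := filter_onI Gfil GS GYS; rewrite setDIK => /(filter_on_neq0 Gfil).
split => // S SY.
have [[P [FP PS0]]|nP] := pselect (exists P, F P /\ P `&` S = set0).
  right; apply: (filter_onS Ffil FP); last by move=> z [].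
  move=> z Pz; split; first exact: (filter_on_sub Ffil FP).
  by move=> Sz; have : (P `&` S) z by []; rewrite PS0.
(* otherwise the traces of F on S generate a filter, equal to F by maximality *)
left; pose G := [set Q | Q `<=` Y /\ exists2 P, F P & P `&` S `<=` Q].
have Gfil : is_filter_on Y G.
  split.
  - by move=> Q [].
  - by exists Y; split => //; exists Y; [exact: filter_on_total Ffil | move=> z []].
  - move=> [_ [P FP PS]]; apply: nP; exists P; split => //.
    by apply/seteqP; split => // z /PS.
  - move=> Q1 Q2 [Q1Y [P1 FP1 PQ1]] [_ [P2 FP2 PQ2]]; split; first by move=> z [/Q1Y].
    exists (P1 `&` P2); first exact: (filter_onI Ffil FP1 FP2).
    by move=> z [[P1z P2z] Sz]; split; [apply: PQ1 | apply: PQ2].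
  - move=> Q1 Q2 [_ [P FP PQ]] Q12 Q2Y; split => //.
    by exists P => // z /PQ /Q12.
have FG : F `<=` G.
  by move=> P FP; split; [exact: (filter_on_sub Ffil FP) | exists P => // z []].
rewrite -(Fmax G Gfil FG); split => //; exists Y; first exact: filter_on_total.
by move=> z [].
Qed.

Lemma ultrafilter_on_trace Y Y' (F : set (set T)) :
  is_ultrafilter_on Y' F -> F (Y `&` Y') ->
  is_ultrafilter_on Y [set S | S `<=` Y /\ F (S `&` Y')].
Proof.
move=> /ultrafilter_onP [Ffil Fdich] FYY; apply/ultrafilter_onP; split.
  split.
  - by move=> S [].
  - by exists Y; split.
  - by move=> [_]; rewrite set0I; exact: filter_on_neq0 Ffil.
  - move=> S1 S2 [S1Y F1] [_ F2]; split; first by move=> z [/S1Y].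
    apply: (filter_onS Ffil (filter_onI Ffil F1 F2)); last by move=> z [].
    by move=> z [[? ?] [? ?]].
  - move=> S1 S2 [_ F1] S12 S2Y; split => //.
    by apply: (filter_onS Ffil F1); [move=> z [/S12] | move=> z []].
move=> S SY.
have [FS|FnS] := Fdich (S `&` Y') (@subIsetr _ _ _); [left|right] => //.
split; first by move=> z [].
apply: (filter_onS Ffil (filter_onI Ffil FnS FYY)); last by move=> z [].
by move=> z [[Y'z nS] [Yz _]]; split => //; split => // Sz; apply: nS.
Qed.

Lemma UltraFilter_ultrafilter_on (F : set (set T)) :
  filter.UltraFilter F -> is_ultrafilter_on setT F.
Proof.
move=> F_ultra; have Fproper := @filter.ultra_proper _ _ F_ultra.
have Ffilter := @filter.filter_filter _ _ Fproper.
apply/ultrafilter_onP; split; last first.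
  by move=> S _; rewrite setTD; exact: filter.in_ultra_setVsetC.
split=> //.
- by exists setT; exact: filter.filterT.
- exact: filter.filter_not_empty.
- by move=> ? ?; apply: filter.filterI.
- by move=> S1 S2 FS1 S12 _; apply: filter.filterS S12 FS1.
Qed.

End Topology.

Section UltrafilterTopology.
Variables (K : fieldType) (A : set K).
Local Notation Z := (zar A).
Implicit Types (V W : Z) (Y : set Z) (U : set (set Z)).

Lemma zar_inj V W : proj1_sig V = proj1_sig W -> V = W.
Proof. by case: V W => [V pV] [W pW] /= eVW; apply: eq_exist. Qed.

Lemma Bset1P V x : Bset A [set x] V <-> proj1_sig V x.
Proof. by split => [Vx|Vx y ->]; [apply: Vx |]. Qed.

Lemma A_uf_zar Y U : is_ultrafilter_on Y U ->
  is_valring (A_uf A Y U) /\ A `<=` A_uf A Y U.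
Proof.
move=> /ultrafilter_onP [Ufil Udich].
have A_uf_common x : (forall V, Y V -> proj1_sig V x) -> A_uf A Y U x.
  move=> Yx; apply: (filter_onS Ufil (filter_on_total Ufil)); last by move=> z [].
  by move=> V YV; split => //; apply/Bset1P; apply: Yx.
have A_uf_op op x y :
    (forall V, proj1_sig V x -> proj1_sig V y -> proj1_sig V (op x y)) ->
    A_uf A Y U x -> A_uf A Y U y -> A_uf A Y U (op x y).
  move=> Vop Ux Uy; apply: (filter_onS Ufil (filter_onI Ufil Ux Uy)); last by move=> z [].
  by move=> V [[/Bset1P Vx YV] [/Bset1P Vy _]]; split => //; apply/Bset1P; apply: Vop.
split; last by move=> a Aa; apply: A_uf_common => V _; case: (proj2_sig V) => _; apply.
split; first split.
- by apply: A_uf_common => V _; case: (proj2_sig V) => [[[]]].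
- split=> x y.
    apply: (A_uf_op (fun a b => a - b)%R) => V.
    by case: (proj2_sig V) => [[[_ [Vsub _]] _] _]; apply: Vsub.
  apply: (A_uf_op (fun a b => a * b)%R) => V.
  by case: (proj2_sig V) => [[[_ [_ Vmul]] _] _]; apply: Vmul.
- move=> x x0.
  have [|Unx] := Udich _ (@subIsetr _ (Bset A [set x]) Y); [by left | right].
  apply: (filter_onS Ufil Unx); last by move=> z [].
  move=> V [YV nVx]; split => //; apply/Bset1P.
  case: (proj2_sig V) => [[_ Vval] _]; case: (Vval x x0) => // Vx.
  by exfalso; apply: nVx; split => //; apply/Bset1P.
Qed.

Definition uf_limit Y U (U_ultra : is_ultrafilter_on Y U) : Z :=
  exist _ (A_uf A Y U) (A_uf_zar U_ultra).

Lemma A_uf_trace Y Y' U : is_filter_on Y' U -> U (Y `&` Y') ->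
  A_uf A Y [set S | S `<=` Y /\ U (S `&` Y')] = A_uf A Y' U.
Proof.
move=> Ufil UYY; apply/seteqP; split => x /=.
  move=> [_ Ux]; apply: (filter_onS Ufil Ux); last by move=> z [].
  by move=> z [[? _] ?].
move=> Ux; split; first by move=> z [].
apply: (filter_onS Ufil (filter_onI Ufil Ux UYY)); last by move=> z [].
by move=> z [[? ?] [? ?]].
Qed.

Lemma stable_uf_limit Y Y' U (U_ultra : is_ultrafilter_on Y' U) :
  stable_uf A Y -> U (Y `&` Y') -> Y (uf_limit U_ultra).
Proof.
move=> Ystable UYY.
have [V YV eV] := Ystable _ (ultrafilter_on_trace U_ultra UYY).
suff <- : V = uf_limit U_ultra by [].
by apply: zar_inj; rewrite eV /=; apply: A_uf_trace => //; case: U_ultra.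
Qed.

Lemma stable_Bset (S : set K) : stable_uf A (Bset A S).
Proof.
move=> U U_ultra; exists (uf_limit U_ultra) => //= s Ss.
have [Ufil _] := U_ultra.
apply: (filter_onS Ufil (filter_on_total Ufil)); last by move=> z [].
by move=> V BV; split => //; apply/Bset1P; apply: BV.
Qed.

(* Finiteness is needed: every V in ~` B_F misses some element of F, but for
   infinite F the limit may still contain all of F. *)
Lemma stable_setC_Bset (F : set K) : finite_set F -> stable_uf A (~` Bset A F).
Proof.
move=> Ffin U U_ultra; exists (uf_limit U_ultra) => //= FV.
have [Ufil _] := U_ultra.
have := @setI_bigcap_closed _ U (~` Bset A F) _ F
  (fun f => Bset A [set f] `&` ~` Bset A F)
  (filter_on_total Ufil) (fun P Q => @filter_onI _ _ _ Ufil P Q) Ffin FV.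
suff -> : ~` Bset A F `&` \bigcap_(f in F) (Bset A [set f] `&` ~` Bset A F) = set0.
  exact: filter_on_neq0 Ufil.
apply/seteqP; split => // V [nFV FV']; apply: nFV => f Ff.
by have [/Bset1P] := FV' f Ff.
Qed.

Lemma uf_open_topology : is_topology (uf_open A).
Proof.
split.
  rewrite /uf_open /= setCT => U U_ultra; exfalso.
  have Ufil : is_filter_on set0 U by case: U_ultra.
  exact: filter_on_neq0 Ufil (filter_on_total Ufil).
split; first by rewrite /uf_open /= setC0 => U U_ultra; exists (uf_limit U_ultra).
split.
  move=> U V sU sV; rewrite /uf_open /= setCI => W W_ultra.
  have [Wfil Wdich] := (ultrafilter_onP _ _).1 W_ultra.
  exists (uf_limit W_ultra) => //.
  have [WU|WV] := Wdich _ (@subsetUl _ (~` U) (~` V)).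
    by left; apply: stable_uf_limit sU _; rewrite setIidl //; apply: subsetUl.
  right; apply: stable_uf_limit sV _; apply: (filter_onS Wfil WV); last by move=> z [].
  by move=> z [[?|?] nU] //; split => //; right.
move=> F Fopen; rewrite /uf_open /= setC_bigcup => W W_ultra.
exists (uf_limit W_ultra) => // U FU; apply: stable_uf_limit (Fopen U FU) _.
have Wfil : is_filter_on (\bigcap_(i in F) ~` i) W by case: W_ultra.
apply: (filter_onS Wfil (filter_on_total Wfil)); last by move=> z [].
by move=> z Fz; split => //; apply: Fz.
Qed.

Lemma uf_open_Bset (F : set K) : finite_set F ->
  uf_open A (Bset A F) /\ uf_open A (~` Bset A F).
Proof.
move=> Ffin; split; first exact: stable_setC_Bset.
by rewrite /uf_open /= setCK; exact: stable_Bset.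
Qed.

Lemma hausdorff_Bset1_clopen (tau : set (set Z)) :
  (forall x, tau (Bset A [set x]) /\ tau (~` Bset A [set x])) -> hausdorff tau.
Proof.
move=> clopen.
suff sep V W : (exists x, proj1_sig V x /\ ~ proj1_sig W x) ->
    exists O O', [/\ tau O, tau O', O V, O' W & O `&` O' = set0].
  move=> V W VW; have [VW'|nVW] := pselect (exists x, proj1_sig V x /\ ~ proj1_sig W x).
    exact: sep.
  have [|O [O' [tO tO' OW O'V OO']]] := sep W V.
    apply: contrapT => nWV; apply: VW; apply: zar_inj; apply/seteqP.
    by split => x Vx; apply: contrapT => nx; [apply: nVW | apply: nWV]; exists x.
  by exists O', O; split => //; rewrite setIC.
move=> [x [Vx nWx]]; exists (Bset A [set x]), (~` Bset A [set x]).
by split; [exact: (clopen x).1 | exact: (clopen x).2 | exact/Bset1P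
  | move/Bset1P | exact: setICr].
Qed.

Lemma uf_open_qcompact : qcompact (uf_open A) setT.
Proof.
move=> cov cov_open Tcov; apply: contrapT => nfin.
pose F0 := [set S : set Z | exists2 fin : set (set Z),
  finite_set fin /\ fin `<=` cov & ~` (\bigcup_(W in fin) W) `<=` S].
have F0proper : filter.ProperFilter F0.
  apply: filter.Build_ProperFilter_ex.
    move=> P [fin finP finS]; apply: contrapT => nP; apply: nfin.
    exists fin => // x _; apply: contrapT => nx; apply: nP; exists x; exact: finS.
  split.
  - by exists set0; [split; [exact: finite_set0 | by []] | by []].
  - move=> P Q [f1 [f1fin f1cov] f1P] [f2 [f2fin f2cov] f2Q]; exists (f1 `|` f2).
      by split; [rewrite finite_setU | move=> W [/f1cov|/f2cov]].
    by rewrite bigcup_setU setCU => z [/f1P ? /f2Q ?].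
  - by move=> P Q PQ [fin fincov finP]; exists fin => // z /finP /PQ.
have [G [/UltraFilter_ultrafilter_on G_ultra_on F0G]] := filter.ultraFilterLemma F0proper.
(* the limit of G avoids every member W of the cover, since G contains ~` W *)
have [W covW Wlim] := Tcov (uf_limit G_ultra_on) I.
suff : (~` W) (uf_limit G_ultra_on) by [].
apply: stable_uf_limit (cov_open W covW) _; rewrite setIT; apply: F0G.
exists [set W]; last by rewrite bigcup_set1.
by split; [exact: finite_set1 | by move=> _ ->].
Qed.

Lemma Bset0 : Bset A set0 = setT.
Proof. by apply/seteqP; split => // V _ x. Qed.

Lemma zariski_open_Bset (F : set K) : finite_set F -> zariski_open A (Bset A F).
Proof. by move=> Ffin; apply: basis_topology_sub; exists F. Qed.

Lemma sharp_open_Bset (F : set K) : finite_set F ->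
  sharp_open A (Bset A F) /\ sharp_open A (~` Bset A F).
Proof. by move=> Ffin; split; apply: gen_topology_sub; exists F => //; [left | right]. Qed.

Lemma sharp_hausdorff : hausdorff (sharp_open A).
Proof. exact: hausdorff_Bset1_clopen (fun x => sharp_open_Bset (finite_set1 x)). Qed.

Lemma uf_hausdorff : hausdorff (uf_open A).
Proof. exact: hausdorff_Bset1_clopen (fun x => uf_open_Bset (finite_set1 x)). Qed.

Lemma uf_open_sharp : uf_open A = sharp_open A.
Proof.
have sharp_uf : sharp_open A `<=` uf_open A.
  apply: gen_topology_min; first exact: uf_open_topology.
  by move=> U [F Ffin [->|->]]; [exact: (uf_open_Bset Ffin).1 | exact: (uf_open_Bset Ffin).2].
apply/seteqP; split => //.
apply: qcompact_hausdorff_coarser_sub sharp_uf uf_open_qcompact sharp_hausdorff.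
exact: gen_topology_is_topology.
Qed.

Lemma uf_finer_zariski : finer (uf_open A) (zariski_open A).
Proof.
apply: basis_topology_min; first exact: uf_open_topology.
by move=> _ [F Ffin ->]; exact: (uf_open_Bset Ffin).1.
Qed.

Lemma zariski_qcompact_Bset (F : set K) : finite_set F ->
  qcompact (zariski_open A) (Bset A F).
Proof.
move=> Ffin cov cov_open; apply: qcompact_closed uf_open_qcompact (uf_open_Bset Ffin).2 _ _.
by move=> W /cov_open; exact: uf_finer_zariski.
Qed.

(* A quasi-compact Zariski open set is a finite union of sets B_F. *)
Lemma zariski_qcompact_sharp_clopen (W : set Z) : zariski_open A W ->
  qcompact (zariski_open A) W -> sharp_open A W /\ sharp_open A (~` W).
Proof.
move=> Wopen Wcpt; split; first by rewrite -uf_open_sharp; exact: uf_finer_zariski.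
have [|x Wx|fin [fin_finite fin_sub] fin_cov] :=
  Wcpt [set B | Bfin A B /\ B `<=` W].
- by move=> _ [[F Ffin ->] _]; exact: zariski_open_Bset.
- by have [B Bfin [Bx BW]] := Wopen x Wx; exists B.
have -> : ~` W = \bigcap_(B in fin) ~` B.
  rewrite -setC_bigcup; congr (~` _); apply/seteqP; split => [x /fin_cov //|x [B finB]].
  by have [_ /(_ x)] := fin_sub B finB.
apply: topology_bigcap => // [|B finB]; first exact: gen_topology_is_topology.
by have [[F Ffin ->] _] := fin_sub B finB; exact: (sharp_open_Bset Ffin).2.
Qed.

Lemma sharp_open_gen_zariski :
  sharp_open A =
    gen_topology_closed
      [set C | closed_in (zariski_open A) C \/
               (zariski_open A C /\ qcompact (zariski_open A) C)].
Proof.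
apply: gen_topology_eq.
  move=> U [F Ffin [->|->]]; apply: gen_topology_sub.
    exists (~` Bset A F); last by rewrite setCK.
    by left; rewrite /closed_in setCK; exact: zariski_open_Bset.
  by exists (Bset A F) => //; right; split;
    [exact: zariski_open_Bset | exact: zariski_qcompact_Bset].
move=> U [C [Cclosed|[Copen Ccpt]] ->].
  by rewrite -/(sharp_open A) -uf_open_sharp; exact: uf_finer_zariski.
exact: (zariski_qcompact_sharp_clopen Copen Ccpt).2.
Qed.

Lemma sharp_open_gen_Bset :
  sharp_open A =
    gen_topology_closed
      [set C | (exists2 F : set K, finite_set F & C = Bset A F) \/
               (exists GG : set (set K), (forall G, GG G -> finite_set G) /\
                  C = \bigcap_(G in GG) ~` Bset A G)].
Proof.
apply: gen_topology_eq.
  move=> U [F Ffin [->|->]]; apply: gen_topology_sub.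
    exists (\bigcap_(G in [set F]) ~` Bset A G); last by rewrite bigcap_set1 setCK.
    by right; exists [set F]; split => // G ->.
  by exists (Bset A F) => //; left; exists F.
move=> U [C [[F Ffin ->]|[GG [GGfin ->]]] ->]; first exact: (sharp_open_Bset Ffin).2.
rewrite -/(sharp_open A) setC_bigcap.
apply: topology_open_local; first exact: gen_topology_is_topology.
move=> V [G GGG nGV]; exists (Bset A G); first exact: (sharp_open_Bset (GGfin G GGG)).1.
by rewrite setCK in nGV; split => // W BW; exists G => //; rewrite setCK.
Qed.

Lemma sharp_open_constructible : sharp_open A = constructible_open A.
Proof.
pose QC := [set W | zariski_open A W /\ qcompact (zariski_open A) W].
have QC_Bset F : finite_set F -> QC (Bset A F).
  by move=> Ffin; split; [exact: zariski_open_Bset | exact: zariski_qcompact_Bset].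
have constr_topo : is_topology (constructible_open A).
  apply: basis_topology_is_topology.
    by move=> Bf QCB _ _ _; apply: QCB; rewrite -Bset0; exact: QC_Bset.
  by move=> U V bU bV Bf QCB BU BI BC; apply: BI (bU _ QCB BU BI BC) (bV _ QCB BU BI BC).
apply/seteqP; split.
  apply: gen_topology_min => // _ [F Ffin [->|->]]; apply: basis_topology_sub.
    by move=> Bf QCB _ _ _; apply: QCB; exact: QC_Bset.
  by move=> Bf QCB _ _ BC; apply: BC; apply: QCB; exact: QC_Bset.
apply: basis_topology_min; first exact: gen_topology_is_topology.
move=> W W_constr.
apply: (clopen_bool_alg (gen_topology_is_topology _) _ W_constr).1 => U [].
exact: zariski_qcompact_sharp_clopen.
Qed.

End UltrafilterTopology.

Theorem theorem3p4 (K : fieldType) (A : set K) (hA : is_subring A) :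
  (* (1) *)
  finer (uf_open A) (zariski_open A) /\
  (* (2) *)
  (forall S : set K, closed_in (uf_open A) (Bset A S)) /\
  (forall F : set K, finite_set F ->
     uf_open A (Bset A F) /\ closed_in (uf_open A) (Bset A F)) /\
  (* (3) *)
  hausdorff (sharp_open A) /\
  (* (4) *)
  sharp_open A =
    gen_topology_closed
      [set C | closed_in (zariski_open A) C \/
               (zariski_open A C /\ qcompact (zariski_open A) C)] /\
  sharp_open A =
    gen_topology_closed
      [set C | (exists2 F : set K, finite_set F & C = Bset A F) \/
               (exists GG : set (set K), (forall G, GG G -> finite_set G) /\
                  C = \bigcap_(G in GG) ~` Bset A G)] /\
  (* (5) *)
  is_topology (uf_open A) /\ hausdorff (uf_open A) /\ qcompact (uf_open A) setT /\
  (* (6) *)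
  uf_open A = sharp_open A /\ sharp_open A = constructible_open A.
Proof.
have closed_Bset (S : set K) : closed_in (uf_open A) (Bset A S).
  by rewrite /closed_in /uf_open /= setCK; exact: stable_Bset.
split; first exact: uf_finer_zariski.
split; first exact: closed_Bset.
split; first by move=> F Ffin; split; [exact: (uf_open_Bset A Ffin).1 | exact: closed_Bset].
split; first exact: sharp_hausdorff.
split; first exact: sharp_open_gen_zariski.
split; first exact: sharp_open_gen_Bset.
split; first exact: uf_open_topology.
split; first exact: uf_hausdorff.
split; first exact: uf_open_qcompact.
by split; [exact: uf_open_sharp | exact: sharp_open_constructible].
Qed.
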